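(* Consider a clinical activity network built from a finite set of activities as follows: each activity $v$ is represented by a start node $v^s$ and an end node $v^e$ joined by an arc $(v^s,v^e)$; the other arcs are of the form $(u^e,v^s)$ (possibly $u=v$), $(\mathrm{START},v^s)$ or $(v^e,\mathrm{END})$, where START and END are two artificial nodes (we write $\mathrm{START}^e=\mathrm{START}$ and $\mathrm{END}^s=\mathrm{END}$). Let $\mathbf{c}^*\in\mathbb{R}^n$ be arc costs. A sequence of activities $(\nu_1,\dots,\nu_k)$ corresponds to the walk $\mathrm{START}\to\nu_1^s\to\nu_1^e\to\cdots\to\nu_k^s\to\nu_k^e\to\mathrm{END}$ (assumed to use only arcs of the network), and its flow vector counts the number of traversals of each arc. Let $\mathbf{x}^*$ be a shortest START–END path under $\mathbf{c}^*$, given by the activity sequence $(\gamma_1,\dots,\gamma_K)$; set $\gamma_0=\mathrm{START}$, $\gamma_{K+1}=\mathrm{END}$. Let $\hat{\mathbf{x}}$ be a patient pathway whose activity sequence is written as $(\Delta_0,\Gamma_1,\Delta_1,\Gamma_2,\dots,\Gamma_K,\Delta_K)$ (between START and END), where each $\Gamma_i\in\{\emptyset,\gamma_i\}$, each $\Delta_i$ is a (possibly empty) finite sequence of activities, and $\Delta_i=\emptyset$ whenever $\Gamma_i=\emptyset$ ($1\le i\le K$). Let $\Gamma_0=\gamma_0$, $\Gamma_{K+1}=\gamma_{K+1}$. For each pair of indices $i<i+l$ with $\Gamma_i=\gamma_i$, $\Gamma_{i+l}=\gamma_{i+l}$ and $\Gamma_{i+1}=\dots=\Gamma_{i+l-1}=\emptyset$,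 if $l>1$ or $\Delta_i\neq\emptyset$, this gap is called a detour $\theta$ (from $\gamma_i$ to $\gamma_{i+l}$, with discordant activities $\Delta_i$). Define its cost $$C(\theta)=\frac{E(\theta)-F(\theta)}{M(\hat{\mathbf{x}})-\mathbf{c}^{*\top}\mathbf{x}^*},$$ where $E(\theta)$ is the total $\mathbf{c}^*$-cost of the arcs of the patient walk from $\gamma_i^e$ to $\gamma_{i+l}^s$ (i.e. $c^*_{\gamma_i^e\delta_1^s}+\phi(\Delta_i)+c^*_{\delta_k^e\gamma_{i+l}^s}$ if $\Delta_i=(\delta_1,\dots,\delta_k)\ne\emptyset$, and $c^*_{\gamma_i^e\gamma_{i+l}^s}$ if $\Delta_i=\emptyset$), and $F(\theta)$ is the total $\mathbf{c}^*$-cost of the arcs of the reference walk $\mathbf{x}^*$ from $\gamma_i^e$ to $\gamma_{i+l}^s$ (i.e. $c^*_{\gamma_i^e\gamma_{i+1}^s}+\phi((\gamma_{i+1},\dots,\gamma_{i+l-1}))+c^*_{\gamma_{i+l-1}^e\gamma_{i+l}^s}$ for $l>1$, and $c^*_{\gamma_i^e\gamma_{i+1}^s}$ for $l=1$). Here $\phi((\nu_1,\dots,\nu_k))=\sum_{j=1}^{k-1}c^*_{\nu_j^e\nu_{j+1}^s}+\sum_{j=1}^k c^*_{\nu_j^s\nu_j^e}$, and $M(\hat{\mathbf{x}})=\max\{\mathbf{c}^{*\top}\mathbf{x}: \mathbf{x}$ is the flow vector of a START–END walk with $\|\mathbf{x}\|_1\le\|\hat{\mathbf{x}}\|_1\}$,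 assumed to differ from $\mathbf{c}^{*\top}\mathbf{x}^*$. Let $\Theta$ be the set of all detours of $\hat{\mathbf{x}}$, and let $\omega(\hat{\mathbf{x}})=1-\dfrac{\mathbf{c}^{*\top}\hat{\mathbf{x}}-\mathbf{c}^{*\top}\mathbf{x}^*}{M(\hat{\mathbf{x}})-\mathbf{c}^{*\top}\mathbf{x}^*}$. Then $$\omega(\hat{\mathbf{x}})=1-\sum_{\theta\in\Theta}C(\theta).$$
   Context: $\omega(\hat{\mathbf{x}})$ is the concordance score of the patient pathway $\hat{\mathbf{x}}$; in the paper $\mathbf{c}^*$ is an arc cost vector obtained by inverse optimization, and $\mathbf{x}^*$ is a reference (concordant) pathway assumed to be a shortest path under $\mathbf{c}^*$. $\Gamma_i$ marks whether the concordant activity $\gamma_i$ appears in its place in the patient pathway, and $\Delta_i$ are the extra (discordant) activities occurring after it. *)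

From HB Require Import structures.
From mathcomp Require Import all_boot all_order all_algebra.
Set Implicit Arguments. Unset Strict Implicit. Unset Printing Implicit Defensive.
Import Order.TTheory GRing.Theory Num.Theory.
Local Open Scope ring_scope.

(* Nodes of the clinical activity network over a set A of activities:
   START, END, and for each activity v a start node Sn v (= v^s) and an
   end node En v (= v^e). *)
Inductive node (A : Type) := START | END | Sn of A | En of A.
Arguments START {A}. Arguments END {A}.

Section Network.
Variables (A : eqType) (R : numDomainType).

Definition allowed_arc (a b : node A) : bool :=
  match a, b with
  | Sn u, En v => u == v
  | En _, Sn _ => true
  | START, Sn _ => true
  | En _, END => true
  | _, _ => false
  end.

Definition is_network (net : rel (node A)) : Prop :=
  (forall a b, net a b -> allowed_arc a b) /\ (forall v, net (Sn v) (En v)).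

Definition walk_nodes (s : seq A) : seq (node A) :=
  START :: rcons (flatten [seq [:: Sn v; En v] | v <- s]) END.

Definition valid_walk (net : rel (node A)) (s : seq A) : bool :=
  path net START (rcons (flatten [seq [:: Sn v; En v] | v <- s]) END).

Fixpoint nodes_cost (c : node A -> node A -> R) (l : seq (node A)) : R :=
  match l with
  | x :: ((y :: _) as t) => c x y + nodes_cost c t
  | _ => 0
  end.

(* c^T x where x is the flow vector (arc traversal counts) of the walk. *)
Definition walk_cost (c : node A -> node A -> R) (s : seq A) : R :=
  nodes_cost c (walk_nodes s).

(* ||x||_1 of the flow vector = number of arc traversals = 2k+1. *)
Definition walk_l1 (s : seq A) : nat := (2 * size s + 1)%N.

Definition phi (c : node A -> node A -> R) (s : seq A) : R :=
  \sum_(p <- zip s (behead s)) c (En p.1) (Sn p.2)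
  + \sum_(v <- s) c (Sn v) (En v).

Definition gap_cost (c : node A -> node A -> R) (a b : node A) (s : seq A) : R :=
  match s with
  | [::] => c a b
  | d :: _ => c a (Sn d) + phi c s + c (En (last d s)) b
  end.

Section Pathway.
Variables (gamma : seq A) (present : nat -> bool) (delta : nat -> seq A).

Definition KK := size gamma.

(* Patient activity sequence (Delta_0, Gamma_1, Delta_1, ..., Gamma_K, Delta_K),
   Gamma_i = gamma_i if present i, empty otherwise (1 <= i <= K). *)
Definition patient_seq : seq A :=
  delta 0 ++ flatten [seq (if present p.1 then [:: p.2] else [::]) ++ delta p.1
                     | p <- zip (iota 1 KK) gamma].

Definition pres (i : nat) : bool :=
  (i == 0)%N || (i == KK.+1) || ((1 <= i <= KK)%N && present i).

Definition next_pres (i : nat) : nat :=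
  (i.+1 + find pres (iota i.+1 (KK.+1 - i)))%N.

(* gamma_i^e (with gamma_0^e = START) and gamma_j^s (with gamma_{K+1}^s = END). *)
Definition ref_e (i : nat) : node A :=
  if i == 0%N then START else nth START [seq En v | v <- gamma] i.-1.
Definition ref_s (j : nat) : node A :=
  nth END [seq Sn v | v <- gamma] j.-1.

Definition is_detour (i : nat) : bool :=
  pres i && ((1 < next_pres i - i)%N || (delta i != [::])).

Variables (c : node A -> node A -> R).

Definition E_cost (i : nat) : R := gap_cost c (ref_e i) (ref_s (next_pres i)) (delta i).
Definition F_cost (i : nat) : R :=
  gap_cost c (ref_e i) (ref_s (next_pres i)) (take (next_pres i - i).-1 (drop i gamma)).

End Pathway.
End Network.

From Pilot Require Import Defs.
From HB Require Import structures.
From mathcomp Require Import all_boot all_order all_algebra.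
From mathcomp Require Import ring zify.
Import Order.TTheory GRing.Theory Num.Theory.
Local Open Scope ring_scope.
Set Implicit Arguments. Unset Strict Implicit.

(* Both walks pass through gamma_i^e and gamma_i^s for every present
   concordant activity gamma_i.  Cutting the patient walk and the reference
   walk at these common nodes splits c^T xhat - c^T x* into a sum, over the
   gaps between consecutive present activities, of the cost difference of
   the two segments of the gap; that difference vanishes when the gap is not
   a detour and is E(theta) - F(theta) when it is.  Dividing by
   M(xhat) - c^T x* gives the theorem; the identity is purely combinatorial. *)

Lemma sum_nat_cond_skip (V : nmodType) (P : pred nat) (F : nat -> V) i j n :
  (i < j <= n)%N -> (forall k, (i < k < j)%N -> ~~ P k) ->
  \sum_(i <= k < n | P k) F k = (if P i then F i else 0) + \sum_(j <= k < n | P k) F k.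
Proof.
move=> /andP[lt_ij le_jn] notP; rewrite big_ltn_cond; last exact: leq_trans le_jn.
rewrite (big_cat_nat lt_ij le_jn) /= big1_seq ?add0r; last first.
  by move=> k /andP[Pk]; rewrite mem_index_iota => /notP; rewrite Pk.
by case: (P i); rewrite ?add0r.
Qed.

Lemma drop_cons_ex (T : Type) (s : seq T) i :
  (i < size s)%N -> exists x, drop i s = x :: drop i.+1 s.
Proof.
move=> lt_is; case Es: (drop i s) (size_drop i s) => [|x t] /= size_t.
  by exfalso; lia.
by exists x; rewrite -add1n -drop_drop Es /= drop0.
Qed.

Section WalkCost.
Variables (A : eqType) (R : numDomainType) (c : node A -> node A -> R).

Definition activity_nodes (s : seq A) : seq (node A) :=
  flatten [seq [:: Sn v; En v] | v <- s].

Lemma activity_nodes_cat s t :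
  activity_nodes (s ++ t) = activity_nodes s ++ activity_nodes t.
Proof. by rewrite /activity_nodes map_cat flatten_cat. Qed.

Lemma nodes_cost_cat l1 x l2 :
  nodes_cost c (l1 ++ x :: l2) = nodes_cost c (rcons l1 x) + nodes_cost c (x :: l2).
Proof.
elim: l1 => [|a [|b l1] IH] /=; first by rewrite add0r.
  by rewrite addr0.
by rewrite -addrA -IH.
Qed.

Lemma gap_costE a b s : gap_cost c a b s = nodes_cost c (a :: rcons (activity_nodes s) b).
Proof.
elim: s a => [|d s IH] a; first by rewrite /= addr0.
have -> : nodes_cost c (a :: rcons (activity_nodes (d :: s)) b) =
  c a (Sn d) + (c (Sn d) (En d) + nodes_cost c (En d :: rcons (activity_nodes s) b)) by [].
rewrite -IH; case: s {IH} => [|d' s] /=.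
  by rewrite /phi /= big_nil big_cons big_nil !add0r addr0 addrA.
by rewrite /phi /= !big_cons /=; ring.
Qed.

Lemma walk_cost_gap s : walk_cost c s = gap_cost c START END s.
Proof. by rewrite gap_costE. Qed.

Lemma gap_cost_cat_cons a b s v t :
  gap_cost c a b (s ++ v :: t) =
  gap_cost c a (Sn v) s + c (Sn v) (En v) + gap_cost c (En v) b t.
Proof.
rewrite !gap_costE activity_nodes_cat rcons_cat -cat_cons.
by rewrite nodes_cost_cat /= addrA.
Qed.

End WalkCost.

Section Pathway.
Variables (A : eqType) (R : numDomainType) (c : node A -> node A -> R)
  (gamma : seq A) (present : nat -> bool) (delta : nat -> seq A).
Hypothesis delta_absent :
  forall i, (1 <= i <= size gamma)%N -> ~~ present i -> delta i = [::].

Local Notation K := (size gamma).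
Local Notation pres := (pres gamma present).
Local Notation next_pres := (next_pres gamma present).
Local Notation is_detour := (is_detour gamma present delta).
Local Notation detour_cost k :=
  (E_cost gamma present delta c k - F_cost gamma present c k).

Definition patient_tail i : seq A :=
  flatten [seq (if present p.1 then [:: p.2] else [::]) ++ delta p.1
          | p <- zip (iota i.+1 (K - i)) (drop i gamma)].

Lemma patient_seqE : patient_seq gamma present delta = delta 0 ++ patient_tail 0.
Proof. by rewrite /patient_seq /patient_tail drop0 subn0. Qed.

Lemma patient_tail_end : patient_tail K = [::].
Proof. by rewrite /patient_tail subnn; case: (drop _ _). Qed.

Lemma patient_tailS i g : drop i gamma = g :: drop i.+1 gamma ->
  patient_tail i =
  ((if present i.+1 then [:: g] else [::]) ++ delta i.+1) ++ patient_tail i.+1.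
Proof.
move=> drop_i; have := size_drop i gamma; rewrite drop_i /= size_drop => size_i.
by rewrite /patient_tail drop_i -size_i.
Qed.

Lemma pres_present k : (1 <= k <= K)%N -> pres k = present k.
Proof.
rewrite /Defs.pres /KK; case: k => // k /andP[_ le_kK].
by rewrite eqSS (ltn_eqF le_kK) le_kK.
Qed.

Lemma patient_tail_skip i j : (i < j <= K.+1)%N ->
  (forall k, (i < k < j)%N -> ~~ pres k) -> patient_tail i = patient_tail j.-1.
Proof.
case/andP=> lt_ij le_jK absent.
have [n] := ubnP (j.-1 - i); elim: n i lt_ij absent => // n IH i lt_ij absent lt_n.
have [-> | ne_ij1] := eqVneq i j.-1; first by [].
have lt_i1j : (i.+1 < j)%N by lia.
have [g drop_i] := @drop_cons_ex _ gamma i ltac:(lia).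
have absent_i1 : ~~ present i.+1 by rewrite -pres_present ?absent //; lia.
rewrite (patient_tailS drop_i) (negbTE absent_i1) delta_absent //; last by lia.
by apply: IH => // [k /andP[lt_i1k lt_kj]|]; [apply: absent; lia | lia].
Qed.

Lemma next_presP i : (i <= K)%N ->
  [/\ (i < next_pres i <= K.+1)%N, pres (next_pres i)
    & forall k, (i < k < next_pres i)%N -> ~~ pres k].
Proof.
move=> le_iK; rewrite /Defs.next_pres /KK.
set s := iota i.+1 (K.+1 - i).
have has_s : has pres s.
  apply/hasP; exists K.+1; last by rewrite /Defs.pres /KK eqxx orbT.
  by rewrite mem_iota; lia.
have := has_s; rewrite has_find size_iota => lt_find.
split; first by lia.
  by have := nth_find 0%N has_s; rewrite nth_iota.
move=> k lt_k; have lt_kfind : (k - i.+1 < find pres s)%N by lia.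
have := before_find 0%N lt_kfind; rewrite nth_iota; last by lia.
by rewrite subnKC //; lia.
Qed.

Lemma ref_nodes_at j : (1 <= j <= K)%N -> exists g,
  [/\ drop j.-1 gamma = g :: drop j gamma, ref_s gamma j = Sn g & ref_e gamma j = En g].
Proof.
move=> /andP[lt0j le_jK]; have [g drop_j] := @drop_cons_ex _ gamma j.-1 ltac:(lia).
rewrite prednK // in drop_j; exists g; split=> //.
  by rewrite /ref_s -[j.-1]addn0 -nth_drop -map_drop drop_j.
by rewrite /ref_e (gtn_eqF lt0j) -[j.-1]addn0 -nth_drop -map_drop drop_j.
Qed.

Lemma ref_s_end : ref_s gamma K.+1 = END.
Proof. by rewrite /ref_s nth_default // size_map. Qed.

Lemma detour_cost_eq0 i : pres i -> ~~ is_detour i -> detour_cost i = 0.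
Proof.
rewrite /Defs.is_detour /E_cost /F_cost => -> /norP[short /negPn/eqP ->].
by rewrite (_ : (_ - i).-1 = 0)%N ?take0 ?subrr //; lia.
Qed.

(* Strong induction along the present indices: with j := next_pres i, both
   walks from gamma_i^e go through gamma_j^s and gamma_j^e, and the segments
   before gamma_j^s are exactly those compared by E and F. *)
Lemma tail_cost_sub_detours i : (i <= K)%N -> pres i ->
  gap_cost c (ref_e gamma i) END (delta i ++ patient_tail i)
  - gap_cost c (ref_e gamma i) END (drop i gamma)
  = \sum_(i <= k < K.+1 | is_detour k) detour_cost k.
Proof.
have [n] := ubnP (K - i); elim: n i => // n IH i lt_n le_iK pres_i.
have [range_j pres_j between_ij] := next_presP le_iK.
have skip_between k : (i < k < next_pres i)%N -> ~~ is_detour k.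
  by move/between_ij; rewrite /Defs.is_detour => /negbTE ->.
rewrite (sum_nat_cond_skip _ range_j skip_between).
have -> : (if is_detour i then detour_cost i else 0) = detour_cost i.
  by case: ifPn => // /(detour_cost_eq0 pres_i) ->.
rewrite /E_cost /F_cost; set j := next_pres i in range_j pres_j between_ij *.
have [le_jK | Ej] : (j <= K)%N \/ j = K.+1 by lia.
  have range_j' : (1 <= j <= K)%N by lia.
  have [g [drop_g ref_s_j ref_e_j]] := ref_nodes_at range_j'.
  have present_j : present j by rewrite -pres_present.
  have -> : patient_tail i = g :: delta j ++ patient_tail j.
    rewrite (patient_tail_skip range_j between_ij) (patient_tailS drop_g).
    by rewrite prednK ?present_j //; lia.
  set ref_ij := take (j - i).-1 (drop i gamma).
  have -> : drop i gamma = ref_ij ++ g :: drop j gamma.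
    rewrite -[LHS](cat_take_drop (j - i).-1) drop_drop.
    by rewrite (_ : (j - i).-1 + i = j.-1)%N ?drop_g //; lia.
  rewrite -(IH j) //; last by lia.
  by rewrite !gap_cost_cat_cons ref_s_j ref_e_j; ring.
rewrite (patient_tail_skip range_j between_ij) Ej /= patient_tail_end cats0.
rewrite ref_s_end big_geq // addr0 take_oversize // size_drop; lia.
Qed.

End Pathway.

Theorem theorem1 (A : finType) (R : realFieldType)
  (net : rel (node A)) (c : node A -> node A -> R)
  (gamma : seq A) (present : nat -> bool) (delta : nat -> seq A) (M : R) :
  is_network net ->
  (* x* (activity sequence gamma) is a shortest START-END path under c *)
  valid_walk net gamma -> uniq gamma ->
  (forall s, valid_walk net s -> walk_cost c gamma <= walk_cost c s) ->
  (* patient pathway structure *)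
  (forall i, (1 <= i <= size gamma)%N -> ~~ present i -> delta i = [::]) ->
  valid_walk net (patient_seq gamma present delta) ->
  (* M(xhat) = max { c^T x : x a START-END walk with ||x||_1 <= ||xhat||_1 } *)
  (exists s, [/\ valid_walk net s,
     (walk_l1 s <= walk_l1 (patient_seq gamma present delta))%N & walk_cost c s = M]) ->
  (forall s, valid_walk net s ->
     (walk_l1 s <= walk_l1 (patient_seq gamma present delta))%N -> walk_cost c s <= M) ->
  M != walk_cost c gamma ->
  1 - (walk_cost c (patient_seq gamma present delta) - walk_cost c gamma)
        / (M - walk_cost c gamma)
  = 1 - \sum_(i <- iota 0 (size gamma).+1 | is_detour gamma present delta i)
          (E_cost gamma present delta c i - F_cost gamma present c i)
            / (M - walk_cost c gamma).
Proof.
move=> _ _ _ _ delta_absent _ _ _ _.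
rewrite -mulr_suml !walk_cost_gap patient_seqE.
have := tail_cost_sub_detours c delta_absent (leq0n _) isT.
by rewrite drop0 /index_iota subn0 => ->.
Qed.
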